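(* Let $T$ be a tree with colour classes $A$ and $B$ such that $|A|\le |B|$ and $\delta(A)=\min\{d_T(x):x\in A\}\ge 2$. Then: (i) $\beta(T)=|A|$; (ii) $\min\{\beta(T'):T'\in\mathcal{H}(T)\}\ge |A|$; (iii) for every $m\ge 1$, the graph $K_{|A|-1}\vee K_m^c$ contains no member of $\mathcal{H}(T)$ as a subgraph.
   Context: $\beta(G)$ is the (vertex) covering number of $G$. $K_m^c$ is the empty graph on $m$ vertices and $\vee$ denotes the join. A vertex split on a vertex $v$ of $H$ replaces $v$ by an independent set of $d(v)$ new vertices, each adjacent to exactly one vertex of $N_H(v)$, distinct new vertices adjacent to distinct neighbours; a vertex split on $U\subseteq V(H)$ applies this to the vertices of $U$ one by one. The splitting family $\mathcal{H}(H)$ is the family of all graphs obtained from $H$ by a vertex split on some $U\subseteq V(H)$. *)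

From mathcomp Require Import all_boot.
Set Implicit Arguments. Unset Strict Implicit. Unset Printing Implicit Defensive.

Section Graphs.
Variable V : finType.
Implicit Types (e : rel V) (U A B S : {set V}).

Definition deg e (x : V) : nat := #|[set y | e x y]|.

Definition connected e : Prop := forall x y : V, connect e x y.
Definition acyclic e : Prop :=
  forall p : seq V, uniq p -> 3 <= size p -> ~~ cycle e p.
Definition is_tree e : Prop := [/\ 0 < #|V|, connected e & acyclic e].

Definition colour_classes e A B : Prop :=
  [/\ A :&: B = set0, A :|: B = setT &
      forall x y, e x y -> (x \in A) = (y \in B)].

Definition vcover e S : bool :=
  [forall x, forall y, e x y ==> (x \in S) || (y \in S)].
Definition beta e : nat :=
  \big[minn/#|V|]_(S : {set V} | vcover e S) #|S|.

(* Vertex split on U (closed form of splitting the vertices of U one by one):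
   vertices: inl x for x not in U, and inr (u,w) for u in U and w a neighbour
   of u (the new vertex of the split of u attached to w). *)
Definition split_vert e U (p : V + (V * V)) : bool :=
  match p with
  | inl x => x \notin U
  | inr (u, w) => (u \in U) && e u w
  end.
Definition split_type e U := {p : V + (V * V) | split_vert e U p}.
Definition rep U (x y : V) : V + (V * V) :=
  if x \in U then inr (x, y) else inl x.
Definition split_rel e U : rel (split_type e U) :=
  fun p q => [exists x, exists y,
    [&& e x y, val p == rep U x y & val q == rep U y x]].
End Graphs.

Definition join_type (k m : nat) := ('I_k + 'I_m)%type.
Definition join_rel (k m : nat) : rel (join_type k m) :=
  fun p q => match p, q with
  | inl i, inl j => i != j
  | inl _, inr _ => true
  | inr _, inl _ => true
  | inr _, inr _ => false
  end.

Definition subgraph_of (W X : finType) (r : rel W) (s : rel X) : Prop :=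
  exists f : W -> X, injective f /\ forall x y, r x y -> s (f x) (f y).

Arguments split_rel {V} e U _ _.
Arguments split_vert {V} e U p.
Arguments split_type {V} e U.
Arguments rep {V} U x y.
Arguments beta {V} e.
Arguments deg {V} e x.
Arguments join_rel : clear implicits.
Arguments subgraph_of {W X} r s.

(* Root the tree anywhere.  A vertex of A has at least two neighbours but at
   most one parent (two parents of v would be joined through the root by a
   path avoiding v, closing a cycle), hence a child; sending each vertex of A
   to one of its children is injective, again because parents are unique.
   The resulting |A| pairwise disjoint edges a f(a) survive every vertex
   split, so every vertex cover of T or of a split of T has at least |A|
   vertices, while A itself covers T.  An embedding of a split of T into
   K_{|A|-1} v K_m^c would pull the cover K_{|A|-1} back to a cover of the
   split with only |A|-1 vertices. *)
From mathcomp Require Import all_boot order.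
Set Implicit Arguments. Unset Strict Implicit. Unset Printing Implicit Defensive.

Section CoveringNumber.
Variables (V : finType) (e : rel V).

Lemma vcoverP (S : {set V}) :
  reflect (forall x y, e x y -> (x \in S) || (y \in S)) (vcover e S).
Proof.
apply: (iffP forallP) => [S_cover x y | S_cover x].
  by move/forallP/(_ y)/implyP: (S_cover x); apply.
by apply/forallP => y; apply/implyP; apply: S_cover.
Qed.

Lemma beta_le (S : {set V}) : vcover e S -> beta e <= #|S|.
Proof. exact: (@Order.TotalTheory.bigmin_le_cond _ nat _ #|V| S (vcover e)). Qed.

Lemma beta_ge n : (forall S : {set V}, vcover e S -> n <= #|S|) -> n <= beta e.
Proof.
move=> n_le; apply: (big_ind (leq n)) => [||S /n_le //].
- have /n_le : vcover e setT by apply/vcoverP => x y _; rewrite in_setT.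
  by rewrite cardsT.
- by move=> k l nk nl; rewrite leq_min nk nl.
Qed.

End CoveringNumber.

Lemma leq_card_matching_cover (I W : finType) (u w : I -> W) (S : {set W}) :
  injective u -> injective w -> (forall i j, u i != w j) ->
  (forall i, (u i \in S) || (w i \in S)) -> #|I| <= #|S|.
Proof.
move=> u_inj w_inj uw S_cover.
pose g i := if u i \in S then u i else w i.
have g_inj : injective g.
  move=> i j; rewrite /g; case: ifP => _; case: ifP => _.
  - exact: u_inj.
  - by move=> uw_ij; have := uw i j; rewrite uw_ij eqxx.
  - by move=> uw_ji; have := uw j i; rewrite uw_ji eqxx.
  - exact: w_inj.
rewrite -cardsT -(card_imset setT g_inj); apply/subset_leq_card/subsetP.
move=> _ /imsetP [i _ ->]; rewrite /g; case: ifP => // uS.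
by have := S_cover i; rewrite uS.
Qed.

Lemma path_parity (V : finType) (e : rel V) (A : {set V}) :
  (forall x y, e x y -> (x \in A) = (y \notin A)) ->
  forall x p, path e x p -> (last x p \in A) = (x \in A) (+) odd (size p).
Proof.
move=> eA x p; elim: p x => [|y p IH] x /=; first by rewrite addbF.
case/andP=> exy /IH ->; rewrite (eA _ _ exy).
by case: (y \in A); case: (odd (size p)).
Qed.

Lemma path_restrict_all (T : Type) (P : pred T) (e : rel T) x s :
  path [rel a b | [&& P a, P b & e a b]] x s -> all P s.
Proof. by elim: s x => //= y s IH x /andP [/and3P [_ -> _] /IH]. Qed.

Section TreeDepth.
Variables (V : finType) (e : rel V) (r : V).
Hypothesis e_conn : connected e.

Lemma exists_path_from_root v :
  exists n, [exists p : n.-tuple V, path e r p && (last r p == v)].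
Proof.
case/connectP: (e_conn r v) => p p_path ->; exists (size p).
by apply/existsP; exists (in_tuple p); rewrite /= p_path eqxx.
Qed.

Definition depth v := ex_minn (exists_path_from_root v).

Lemma depth_le_size p : path e r p -> depth (last r p) <= size p.
Proof.
move=> p_path; rewrite /depth; case: ex_minnP => n _; apply.
by apply/existsP; exists (in_tuple p); rewrite /= p_path eqxx.
Qed.

Lemma depth_path v : exists p, [/\ path e r p, last r p = v & size p = depth v].
Proof.
rewrite /depth; case: ex_minnP => n /existsP [p /andP [p_path /eqP p_last]] _.
by exists p; rewrite size_tuple.
Qed.

Lemma depth_le_mem p x : path e r p -> x \in r :: p -> depth x <= size p.
Proof.
move=> p_path; rewrite in_cons => /predU1P [-> | /splitPr x_in].
  by have := depth_le_size (p := [::]) isT; rewrite leqn0 => /eqP ->.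
move: x_in p_path => [p1 p2]; rewrite cat_path /= => /and3P [p1_path ex _].
have := depth_le_size (p := rcons p1 x); rewrite rcons_path p1_path ex last_rcons.
by rewrite size_rcons size_cat /= addnS => /(_ isT) /leq_trans; apply; rewrite leq_addr.
Qed.

Lemma depth_edge u v : e u v -> depth v <= (depth u).+1.
Proof.
move=> euv; have [p [p_path p_last p_size]] := depth_path u.
have := depth_le_size (p := rcons p v).
by rewrite rcons_path p_path p_last euv last_rcons size_rcons p_size; apply.
Qed.

Lemma connect_root_avoid v w :
  depth w < depth v -> connect [rel a b | [&& a != v, b != v & e a b]] r w.
Proof.
have [p [p_path <- p_size]] := depth_path w; move=> lt_wv.
have p_avoid : all (predC1 v) (r :: p).
  apply/allP => x /(depth_le_mem p_path) x_le; apply/eqP => xv.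
  by move: lt_wv; rewrite -xv -p_size ltnNge x_le.
apply/connectP; exists p => //; apply: sub_in_path p_avoid p_path.
by move=> a b; rewrite !inE /= => -> ->.
Qed.

Hypotheses (e_sym : symmetric e) (e_acyc : acyclic e).

Lemma depth_parent_unique u u' v : e u v -> e u' v ->
  (depth u).+1 = depth v -> (depth u').+1 = depth v -> u = u'.
Proof.
move=> euv eu'v du du'; case: (eqVneq u u') => // neq_uu'; exfalso.
pose e' := [rel a b | [&& a != v, b != v & e a b]].
have e'_sym : symmetric e'.
  by move=> a b /=; rewrite e_sym andbA [(a != v) && _]andbC -andbA.
have : connect e' u u'.
  apply: connect_trans (connect_root_avoid _); last by rewrite du'.
  by rewrite (sym_connect_sym e'_sym) connect_root_avoid // du.
case/connectP=> p /shortenP [q q_path q_uniq _ q_last].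
have q_nil : q != [::] by apply: contraNneq neq_uu' => q0; rewrite q_last q0.
have u_neq_v : u != v.
  by apply/eqP => uv; move: du; rewrite uv => /eqP; rewrite eqn_leq ltnn.
apply: (negP (e_acyc (p := v :: u :: q) _ _)).
- have v_notin_q : v \notin q.
    by rewrite -has_pred1 -all_predC (path_restrict_all (P := predC1 v) q_path).
  by rewrite /= in_cons negb_or eq_sym u_neq_v v_notin_q.
- by case: q q_nil {q_path q_uniq q_last}.
- rewrite /= rcons_path e_sym euv (sub_path _ q_path) -?q_last //.
  by move=> a b /and3P [].
Qed.

Variable A : {set V}.
Hypothesis e_bip : forall x y, e x y -> (x \in A) = (y \notin A).

Lemma mem_depth_parity v : (v \in A) = (r \in A) (+) odd (depth v).
Proof.
have [p [p_path p_last p_size]] := depth_path v.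
by rewrite -p_size -p_last (path_parity e_bip p_path).
Qed.

Lemma depth_edgeS u v : e u v ->
  ((depth u).+1 == depth v) || ((depth v).+1 == depth u).
Proof.
move=> euv; have dvu := depth_edge euv.
have duv : depth u <= (depth v).+1 by apply: depth_edge; rewrite e_sym.
case: (ltngtP (depth u) (depth v)) => [lt_uv | lt_vu | eq_uv].
- by rewrite eqn_leq lt_uv dvu.
- by rewrite orbC eqn_leq lt_vu duv.
- have := e_bip euv; rewrite (mem_depth_parity u) (mem_depth_parity v) eq_uv.
  by case: (_ (+) _).
Qed.

Lemma exists_child a : 1 < deg e a -> exists c, e a c && ((depth a).+1 == depth c).
Proof.
rewrite /deg => /card_gt1P [c1 [c2 [+ + c12]]]; rewrite !inE => ac1 ac2.
case: (boolP [exists c, e a c && ((depth a).+1 == depth c)]) => [/existsP // | ].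
move/existsPn => no_child.
have parent c : e a c -> (depth c).+1 = depth a.
  move=> ac; have := depth_edgeS ac; have := no_child c.
  by rewrite ac andTb => /negbTE -> /eqP.
by case/eqP: c12; apply: (depth_parent_unique (v := a)); rewrite 1?e_sym ?parent.
Qed.

End TreeDepth.

Lemma tree_saturating_matching (V : finType) (e : rel V) (A : {set V}) :
  symmetric e -> is_tree e ->
  (forall x y, e x y -> (x \in A) = (y \notin A)) ->
  {in A, forall a, 1 < deg e a} ->
  exists2 f : V -> V, {in A &, injective f} & {in A, forall a, e a (f a)}.
Proof.
move=> e_sym [/card_gt0P [r _] e_conn e_acyc] e_bip A_deg.
pose child a c := e a c && ((depth r e_conn a).+1 == depth r e_conn c).
pose f a := odflt a [pick c | child a c].
have f_child a : a \in A -> child a (f a).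
  move=> aA; rewrite /f; case: pickP => [//| no_child].
  have [c ac] := exists_child r e_conn e_sym e_acyc e_bip (A_deg a aA).
  by have := no_child c; rewrite /= /child ac.
exists f => [a b aA bA fab | a /f_child /andP [] //].
have /andP [afa /eqP dfa] := f_child a aA.
have /andP [bfb /eqP dfb] := f_child b bA.
rewrite -fab in bfb dfb; exact: (depth_parent_unique _ _ afa bfb dfa dfb).
Qed.

Definition split_base (V : Type) (p : V + V * V) : V :=
  match p with inl x => x | inr (x, _) => x end.

Lemma split_base_rep (V : finType) (U : {set V}) x y : split_base (rep U x y) = x.
Proof. by rewrite /rep; case: ifP. Qed.

Section SaturatingMatching.
Variables (V : finType) (e : rel V) (U A : {set V}) (f : V -> V).
Hypothesis e_sym : symmetric e.
Hypotheses (f_inj : {in A &, injective f}) (f_edge : {in A, forall a, e a (f a)}).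
Hypothesis f_out : {in A, forall a, f a \notin A}.

Lemma leq_card_vcover (S : {set V}) : vcover e S -> #|A| <= #|S|.
Proof.
move/vcoverP=> S_cover; rewrite -card_sig.
apply: (leq_card_matching_cover (u := val : {a | a \in A} -> V) (w := f \o val)).
- exact: val_inj.
- by move=> a b /(f_inj (valP a) (valP b)) /val_inj.
- by move=> a b; apply/eqP => /= ab; have := f_out (valP b); rewrite -ab (valP a).
- move=> a; exact: S_cover (f_edge (valP a)).
Qed.

Lemma split_vert_rep x y : e x y -> split_vert e U (rep U x y).
Proof. by move=> exy; rewrite /rep; case: ifP => /= xU; rewrite xU ?exy. Qed.

Lemma leq_card_split_cover (W : finType) (phi : split_type e U -> W) (S : {set W}) :
  injective phi ->
  (forall p q, split_rel e U p q -> (phi p \in S) || (phi q \in S)) ->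
  #|A| <= #|S|.
Proof.
move=> phi_inj S_cover.
have f_edge_sym (a : {a | a \in A}) : e (f (val a)) (val a).
  by rewrite e_sym f_edge ?(valP a).
pose us (a : {a | a \in A}) : split_type e U :=
  exist (split_vert e U) _ (split_vert_rep (f_edge (valP a))).
pose ws (a : {a | a \in A}) : split_type e U :=
  exist (split_vert e U) _ (split_vert_rep (f_edge_sym a)).
(* A split vertex remembers the tree vertex it comes from, which keeps the
   images of distinct matching edges disjoint. *)
have base_phi p q : phi p = phi q -> split_base (val p) = split_base (val q).
  by move/phi_inj ->.
rewrite -card_sig; apply: (leq_card_matching_cover (u := phi \o us) (w := phi \o ws)).
- move=> a b /base_phi; rewrite !split_base_rep; exact: val_inj.
- by move=> a b /base_phi; rewrite !split_base_rep => /(f_inj (valP a) (valP b)) /val_inj.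
- move=> a b; apply/eqP => /base_phi; rewrite !split_base_rep => ab.
  by have := f_out (valP b); rewrite -ab (valP a).
- move=> a; apply: S_cover; apply/existsP; exists (val a); apply/existsP.
  by exists (f (val a)); rewrite f_edge ?(valP a) //= !eqxx.
Qed.

End SaturatingMatching.

Definition join_clique k m : {set join_type k m} := [set inl i | i : 'I_k].

Lemma join_rel_cover k m (p q : join_type k m) :
  join_rel k m p q -> (p \in join_clique k m) || (q \in join_clique k m).
Proof. by case: p q => [i|i] [j|j] //= _; rewrite imset_f ?orbT. Qed.

Lemma card_join_clique k m : #|join_clique k m| = k.
Proof. by rewrite card_imset ?card_ord //; move=> i j []. Qed.

Lemma colour_classes_bip (V : finType) (e : rel V) (A B : {set V}) :
  colour_classes e A B -> forall x y, e x y -> (x \in A) = (y \notin A).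
Proof.
case=> AB0 ABT e_AB x y /e_AB ->.
have : y \in A :|: B by rewrite ABT inE.
have : y \notin A :&: B by rewrite AB0 inE.
by rewrite !inE; case: (y \in A); case: (y \in B).
Qed.

Theorem lemma2p4 (V : finType) (e : rel V) (A B : {set V}) :
  symmetric e -> irreflexive e -> is_tree e ->
  colour_classes e A B -> #|A| <= #|B| ->
  (forall x, x \in A -> 2 <= deg e x) ->
  [/\ beta e = #|A|,
      (forall U : {set V}, #|A| <= beta (split_rel e U)) &
      (0 < #|A| -> forall m : nat, 1 <= m -> forall U : {set V},
         ~ subgraph_of (split_rel e U) (join_rel (#|A| - 1) m))].
Proof.
move=> e_sym _ e_tree /colour_classes_bip e_bip _ A_deg.
have [f f_inj f_edge] := tree_saturating_matching e_sym e_tree e_bip A_deg.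
have f_out : {in A, forall a, f a \notin A}.
  by move=> a aA; rewrite -(e_bip _ _ (f_edge a aA)).
have split_cover U := leq_card_split_cover (U := U) e_sym f_inj f_edge f_out.
split.
- apply/eqP; rewrite eqn_leq beta_le.
    exact: beta_ge (leq_card_vcover f_inj f_edge f_out).
  by apply/vcoverP => x y /e_bip ->; rewrite orNb.
- by move=> U; apply: beta_ge => S /vcoverP S_cover; apply: (split_cover U _ id).
- move=> A_gt0 m _ U [phi [phi_inj phi_edge]].
  have := split_cover U _ phi _ phi_inj (fun p q pq => join_rel_cover (phi_edge p q pq)).
  by rewrite card_join_clique leqNgt ltn_subrL A_gt0.
Qed.
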